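(* Let $\sigma\in\mathrm{NC}_n$ and $1\le i<n$. Then $i$ is a noncrossing descent of $\sigma$ if and only if $i$ is the minimal element of its cycle of $\sigma$ and $i+1$ is not the minimal element of its cycle. In particular, for every $\sigma\in\mathrm{NC}_n\setminus\{\mathrm{id}\}$, $\sigma$ has at least one noncrossing descent.
   Context: A set partition of $[n]$ is noncrossing if there are no distinct blocks $P,Q$ with $a,b\in P$, $c,d\in Q$, $a<c<b<d$. To a noncrossing partition associate $\sigma\in S_n$ acting on each block $\{a_1<\dots<a_p\}$ by $\sigma(a_j)=a_{j-1}$ ($j\ge2$), $\sigma(a_1)=a_p$; $\mathrm{NC}_n$ is the set of these permutations, whose cycles (including fixed points) are the blocks. $s_i=(i,i+1)$, $\sigma s_i=\sigma\circ s_i$, $\ell$ is Coxeter length. $i$ is a noncrossing descent of $\sigma\in\mathrm{NC}_n$ if $\sigma s_i\in\mathrm{NC}_n$ and $\ell(\sigma s_i)<\ell(\sigma)$. *)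

(* Elements of [n] = {1..n} are represented 0-based by 'I_n. *)
From mathcomp Require Import all_boot all_fingroup.
Set Implicit Arguments. Unset Strict Implicit. Unset Printing Implicit Defensive.
Local Open Scope group_scope.

Definition noncrossing (n : nat) (P : {set {set 'I_n}}) : Prop :=
  forall B C, B \in P -> C \in P -> B != C ->
  forall a b c d : 'I_n, a \in B -> b \in B -> c \in C -> d \in C ->
  ~ [/\ (a < c)%N, (c < b)%N & (b < d)%N].

(* For a block B = {a_1 < ... < a_p} and x in B, [block_image B x y] says
   y is the image of x under the cycle: y = a_{j-1} if x = a_j with j >= 2,
   and y = a_p (the maximum of B) if x = a_1 (the minimum of B). *)
Definition block_image (n : nat) (B : {set 'I_n}) (x y : 'I_n) : Prop :=
  y \in B /\
  if [exists z in B, (z < x)%N]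
  then (y < x)%N /\ (forall z, z \in B -> (z < x)%N -> (z <= y)%N)
  else (forall z, z \in B -> (z <= y)%N).

Definition isNC (n : nat) (s : {perm 'I_n}) : Prop :=
  exists P : {set {set 'I_n}},
    [/\ partition P [set: 'I_n], noncrossing P &
        forall B, B \in P -> forall x, x \in B -> block_image B x (s x)].

(* Coxeter length of a permutation of 'I_n = number of inversions. *)
Definition coxlen (n : nat) (s : {perm 'I_n}) : nat :=
  #|[set p : 'I_n * 'I_n | (p.1 < p.2)%N && (s p.2 < s p.1)%N]|.

(* sigma s_i = sigma o s_i, where s_i = (i, i+1) = tperm i j with val j = i+1.
   MathComp's group product is left-to-right ((t * s) x = s (t x)), so
   sigma o s_i is (tperm i j * sigma). *)
Definition mul_s (n : nat) (s : {perm 'I_n}) (i j : 'I_n) : {perm 'I_n} :=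
  tperm i j * s.

(* i is a noncrossing descent (j is the element i+1). *)
Definition nc_descent (n : nat) (s : {perm 'I_n}) (i j : 'I_n) : Prop :=
  isNC (mul_s s i j) /\ (coxlen (mul_s s i j) < coxlen s)%N.

Definition cycle_min (n : nat) (s : {perm 'I_n}) (x : 'I_n) : bool :=
  [forall y in porbit s x, (x <= y)%N].

From mathcomp Require Import all_boot all_fingroup zify.
Set Implicit Arguments. Unset Strict Implicit. Unset Printing Implicit Defensive.

(* For sigma in NC_n, x is the minimum of its cycle iff x <= sigma x: a block
   minimum is sent to the block maximum and every other element to its
   predecessor in the block.  Moreover sigma s_i has fewer inversions than
   sigma iff sigma (i+1) < sigma i.  If sigma s_i is noncrossing, every other
   relative position of i, i+1 and their images creates a crossing between the
   blocks of i and i+1 of sigma s_i.  Conversely, if i is a block minimum and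
   i+1 is not, then either sigma (i+1) = i and sigma s_i splits i off as a
   fixed point, or i is a fixed point and sigma s_i inserts it into the block
   of i+1 just below i+1; as no point lies between i and i+1, both partitions
   remain noncrossing.  Finally, if sigma <> id, the least element j that is not
   a cycle minimum is positive, and j - 1 is a cycle minimum. *)

Section Crossings.
Variable n : nat.
Implicit Types (B C D : {set 'I_n}) (k z : 'I_n).

Definition crosses B C : Prop :=
  exists a b c d, [/\ a \in B, b \in B, c \in C & d \in C] /\
                  [/\ (a < c)%N, (c < b)%N & (b < d)%N].

Lemma noncrossingP (P : {set {set 'I_n}}) :
  noncrossing P <-> {in P &, forall B C, crosses B C -> B = C}.
Proof.
split=> [ncP B C BP CP [a [b [c [d [[aB bB cC dC] lt]]]]] | ncP B C BP CP].
  by apply/eqP; apply: contraT => neBC; case: (ncP B C BP CP neBC a b c d aB bB cC dC).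
move=> /eqP neBC a b c d aB bB cC dC lt.
by apply: neBC (ncP B C BP CP _); exists a, b, c, d.
Qed.

Lemma crosses_map (f : 'I_n -> 'I_n) B C B' C' :
    {in B, forall b, f b \in B'} -> {in C, forall c, f c \in C'} ->
    {in B & C, forall b c : 'I_n,
      ((b < c) = (f b < f c)) /\ ((c < b) = (f c < f b))}%N ->
  crosses B C -> crosses B' C'.
Proof.
move=> fB fC f_mono [a [b [c [d [[aB bB cC dC] [ac cb bd]]]]]].
exists (f a), (f b), (f c), (f d); split; first by rewrite !(fB, fC).
have [<- _] := f_mono a c aB cC; have [_ <-] := f_mono b c bB cC.
by have [<- _] := f_mono b d bB dC.
Qed.

Lemma crossesS B C B' C' :
  B \subset B' -> C \subset C' -> crosses B C -> crosses B' C'.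
Proof. by move=> /subsetP sBB' /subsetP sCC'; apply: (crosses_map (f := id)). Qed.

Lemma crosses1l k C : ~ crosses [set k] C.
Proof. by case=> a [b [c [d [[/set1P-> /set1P-> _ _] [kc ck _]]]]]; lia. Qed.

Lemma crosses1r B k : ~ crosses B [set k].
Proof. by case=> a [b [c [d [[_ _ /set1P-> /set1P->] [_ kb bk]]]]]; lia. Qed.

Section Adjacent.
Variables i j : 'I_n.
Hypothesis ij : val j = (val i).+1.

Lemma ltn_adjacent z : z != i -> z != j ->
  ((z < i) = (z < j))%N /\ ((i < z) = (j < z))%N.
Proof.
move: ij; rewrite -!(inj_eq val_inj) /= => ij' zi zj.
by split; apply/idP/idP; lia.
Qed.

Let raise z := if z == i then j else z.

Let raise_mono C D : i \notin D -> j \notin D ->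
  {in i |: C & D, forall b c : 'I_n, ((b < c) = (raise b < raise c)) /\
                              ((c < b) = (raise c < raise b))}%N.
Proof.
move=> iD jD b c _ cD; have ci : c != i by apply: contraNneq iD => <-.
have cj : c != j by apply: contraNneq jD => <-.
rewrite /raise (negbTE ci); case: eqP => [->|//].
by have [-> ->] := ltn_adjacent ci cj.
Qed.

Let raise_in C : j \in C -> {in i |: C, forall z, raise z \in C}.
Proof. by move=> jC z; rewrite /raise !inE; case: eqP. Qed.

Let raise_out D : i \notin D -> {in D, forall z, raise z \in D}.
Proof. by move=> iD z zD; rewrite /raise; case: eqP => // zi; rewrite -zi zD in iD. Qed.

Lemma crosses_setU1l C D : j \in C -> i \notin D -> j \notin D ->
  crosses (i |: C) D -> crosses C D.
Proof.
move=> jC iD jD; apply: crosses_map (raise_in jC) (raise_out iD) _.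
exact: raise_mono.
Qed.

Lemma crosses_setU1r C D : j \in C -> i \notin D -> j \notin D ->
  crosses D (i |: C) -> crosses D C.
Proof.
move=> jC iD jD; apply: crosses_map (raise_out iD) (raise_in jC) _.
by move=> c b cD bC; have [? ?] := raise_mono iD jD bC cD; split.
Qed.

End Adjacent.
End Crossings.

Section BlockImage.
Variable n : nat.
Implicit Types (B : {set 'I_n}) (x y z : 'I_n).

Lemma block_image_lt B x y :
    y \in B -> (y < x)%N -> {in B, forall z : 'I_n, z < x -> z <= y}%N ->
  block_image B x y.
Proof.
move=> yB yx ymax; split=> //.
by have -> : [exists z in B, (z < x)%N] by apply/existsP; exists y; rewrite yB.
Qed.

Lemma block_image_min B x y :
    y \in B -> {in B, forall z : 'I_n, x <= z}%N ->
    {in B, forall z : 'I_n, z <= y}%N ->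
  block_image B x y.
Proof.
move=> yB xmin ymax; split=> //; case: existsP => // [[z /andP[zB]]].
by rewrite ltnNge xmin.
Qed.

Lemma block_image_ltn B x y z :
  block_image B x y -> z \in B -> (z < x)%N -> (y < x)%N /\ (z <= y)%N.
Proof.
case=> _; case: existsP => [_ [yx ymax] zB zx | noz _ zB zx].
  by split=> //; apply: ymax.
by case: noz; exists z; rewrite zB.
Qed.

Lemma block_image_geq B x y :
  block_image B x y -> (x <= y)%N -> {in B, forall z : 'I_n, x <= z}%N.
Proof.
move=> img xy z zB; rewrite leqNgt; apply/negP => zx.
by have [] := block_image_ltn img zB zx; rewrite ltnNge xy.
Qed.

Lemma block_image_max B x y :
  block_image B x y -> {in B, forall z : 'I_n, x <= z}%N ->
  {in B, forall z : 'I_n, z <= y}%N.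
Proof.
case=> _; case: existsP => [[z /andP[zB zx]] _ xmin | _ ymax _] //.
by move: (xmin z zB); rewrite leqNgt zx.
Qed.

Lemma block_imageD1 B x y z : block_image B x y -> z != y -> block_image (B :\ z) x y.
Proof.
move=> img zy; have yB : y \in B :\ z by case: img => yB _; rewrite !inE eq_sym zy.
case: (ltnP y x) => [yx | xy].
  apply: block_image_lt => // w /setD1P[_ wB] wx.
  by have [] := block_image_ltn img wB wx.
have xmin := block_image_geq img xy.
apply: block_image_min => // w /setD1P[_ wB]; first exact: xmin.
exact: block_image_max img xmin w wB.
Qed.

Lemma block_imageU1_adjacent B i j x y : val j = (val i).+1 ->
  j \in B -> x != j -> block_image B x y -> block_image (i |: B) x y.
Proof.
move=> /= ij jB; rewrite -(inj_eq val_inj) /= => xj img.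
have yB : y \in i |: B by case: img => yB _; apply: setU1r.
case: (ltnP y x) => [yx | xy].
  apply: block_image_lt => // z /setU1P[-> ix | zB zx]; last first.
    by have [] := block_image_ltn img zB zx.
  have [_ jy] := block_image_ltn img jB (ltac:(lia)); lia.
have xmin := block_image_geq img xy; have ymax := block_image_max img xmin.
have := xmin j jB; have := ymax j jB => jy xj'.
by apply: block_image_min => // z /setU1P[-> | zB];
  [lia | apply: xmin | lia | apply: ymax].
Qed.

End BlockImage.

Lemma isNC_of_blocks n (t : {perm 'I_n}) (bl : 'I_n -> {set 'I_n}) :
    (forall x, x \in bl x) -> (forall x y, y \in bl x -> bl y = bl x) ->
    (forall x y, crosses (bl x) (bl y) -> bl x = bl y) ->
    (forall x, block_image (bl x) x (t x)) ->
  isNC t.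
Proof.
move=> bl_id bl_eq bl_nc bl_img; exists [set bl x | x in 'I_n]; split.
- apply/and3P; split.
  + apply/eqP/setP => x; rewrite inE; apply/bigcupP; exists (bl x) => //.
    exact: imset_f.
  + apply/trivIsetP => _ _ /imsetP[x _ ->] /imsetP[y _ ->] ne.
    rewrite -setI_eq0; apply: contraR ne => /set0Pn[z /setIP[zx zy]].
    by rewrite -(bl_eq _ _ zx) -(bl_eq _ _ zy).
  + by apply/imsetP => -[x _ bl0]; have := bl_id x; rewrite -bl0 inE.
- by apply/noncrossingP => _ _ /imsetP[x _ ->] /imsetP[y _ ->]; apply: bl_nc.
- by move=> _ /imsetP[y _ ->] x xy; rewrite -(bl_eq _ _ xy).
Qed.

Section MulTransposition.
Variables (n : nat) (s : {perm 'I_n}) (i j : 'I_n).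

Lemma mul_sE x : mul_s s i j x = s (tperm i j x).
Proof. by rewrite permM. Qed.

Lemma mul_s_l : mul_s s i j i = s j.
Proof. by rewrite mul_sE tpermL. Qed.

Lemma mul_s_r : mul_s s i j j = s i.
Proof. by rewrite mul_sE tpermR. Qed.

Lemma mul_s_id x : x != i -> x != j -> mul_s s i j x = s x.
Proof. by move=> xi xj; rewrite mul_sE tpermD // eq_sym. Qed.

End MulTransposition.

Section NoncrossingPartition.
Variables (n : nat) (s : {perm 'I_n}) (P : {set {set 'I_n}}).
Hypothesis partP : partition P [set: 'I_n].
Hypothesis ncP : noncrossing P.
Hypothesis imgP : forall B, B \in P -> forall x, x \in B -> block_image B x (s x).

Implicit Types x y z : 'I_n.
Local Notation blk := (pblock P).

Let trivP : trivIset P. Proof. by case/and3P: partP. Qed.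

Let coverP x : x \in cover P.
Proof. by case/and3P: partP => /eqP-> _ _; rewrite inE. Qed.

Lemma mem_blk x : x \in blk x.
Proof. by rewrite mem_pblock coverP. Qed.

Lemma blk_eq x y : y \in blk x -> blk y = blk x.
Proof. exact: same_pblock trivP. Qed.

Lemma blk_eqE x y : (blk x == blk y) = (y \in blk x).
Proof. exact: eq_pblock trivP (coverP x). Qed.

Lemma blk_crosses x y : crosses (blk x) (blk y) -> blk x = blk y.
Proof. by apply: (iffLR (noncrossingP P) ncP); apply: pblock_mem. Qed.

Lemma blk_image x : block_image (blk x) x (s x).
Proof. exact: imgP (pblock_mem (coverP x)) x (mem_blk x). Qed.

Lemma perm_blk x : s x \in blk x.
Proof. by case: (blk_image x). Qed.

Lemma perm_ltn x z : z \in blk x -> (z < x)%N -> (s x < x)%N /\ (z <= s x)%N.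
Proof. exact: block_image_ltn (blk_image x). Qed.

Lemma leq_perm_min x : (x <= s x)%N <-> {in blk x, forall z, x <= z}%N.
Proof.
split; first exact: block_image_geq (blk_image x).
by move=> xmin; apply: block_image_max (blk_image x) xmin x (mem_blk x).
Qed.

Lemma perm_max x : (x <= s x)%N -> {in blk x, forall z, z <= s x}%N.
Proof. by move/leq_perm_min; apply: block_image_max (blk_image x). Qed.

Lemma porbit_sub_blk x : {subset porbit s x <= blk x}.
Proof.
move=> _ /porbitP[k ->]; elim: k => [|k IHk]; first by rewrite expg0 perm1 mem_blk.
by rewrite expgSr permM -(blk_eq IHk) perm_blk.
Qed.

Lemma cycle_minE x : cycle_min s x = (x <= s x)%N.
Proof.
apply/forall_inP/idP => [xmin | /leq_perm_min xmin y /porbit_sub_blk]; last exact: xmin.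
by apply: xmin; rewrite -[s x]/((s ^+ 1)%g x) mem_porbit.
Qed.

Lemma adjacent_perm_ltn i j : val j = (val i).+1 -> (s i < s j)%N ->
  (i <= s j)%N /\ (s i < j)%N.
Proof.
move=> /= ij sij; split.
  rewrite leqNgt; apply/negP => sji.
  have sjj : (s j < j)%N by lia.
  have iNj : i \notin blk j.
    by apply/negP => /perm_ltn /(_ ltac:(lia)) [_]; lia.
  suff : blk i = blk j by move=> bij; rewrite -bij mem_blk in iNj.
  apply: blk_crosses; exists (s i), i, (s j), j.
  by rewrite !perm_blk !mem_blk; split=> //; split; lia.
rewrite ltnNge; apply/negP => jsi.
have /leq_perm_min imin : (i <= s i)%N by lia.
have /leq_perm_min jmin : (j <= s j)%N by lia.
have iNj : i \notin blk j by apply/negP => /jmin; lia.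
have sij' : s i != j.
  by apply: contraNneq iNj => sij'; rewrite -blk_eqE -sij' -(blk_eq (perm_blk i)) eqxx.
suff : blk i = blk j by move=> bij; rewrite -bij mem_blk in iNj.
apply: blk_crosses; exists i, (s i), j, (s j).
move: sij'; rewrite !perm_blk !mem_blk -(inj_eq val_inj) /= => sij'.
by split=> //; split; lia.
Qed.

Lemma blk_sym x y : (y \in blk x) = (x \in blk y).
Proof. by rewrite -!blk_eqE eq_sym. Qed.

Lemma blk_fixed x : s x = x -> blk x = [set x].
Proof.
move=> sx; have xmin : (x <= s x)%N by rewrite sx.
apply/setP => z; rewrite inE; apply/idP/eqP => [zx | ->]; last exact: mem_blk.
have := iffLR (leq_perm_min x) xmin z zx; have := perm_max xmin zx.
by rewrite sx => *; apply/val_inj => /=; lia.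
Qed.

Section AdjacentTransposition.
Variables i j : 'I_n.
Hypothesis ij : val j = (val i).+1.
Local Notation t := (mul_s s i j).

Lemma isNC_split_min : (i <= s i)%N -> s j = i -> isNC t.
Proof.
move=> /leq_perm_min imin sji.
have jBi : j \in blk i by rewrite blk_sym -sji perm_blk.
pose bl x := if x == i then [set i] else blk x :\ i.
apply: (@isNC_of_blocks _ _ bl) => [x | x y | x y | x]; rewrite /bl.
- by case: eqP => [->|/eqP xi]; rewrite !inE ?eqxx // xi mem_blk.
- case: eqP => [_ /set1P-> | _ /setD1P[yi yx]]; first by rewrite eqxx.
  by rewrite (negbTE yi) (blk_eq yx).
- case: eqP => [_ /crosses1l // | _]; case: eqP => [_ /crosses1r // | _] cr.
  by rewrite (blk_crosses (crossesS (subsetDl _ _) (subsetDl _ _) cr)).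
case: eqP => [-> | /eqP xi].
  rewrite mul_s_l sji.
  by apply: block_image_min => [|z /set1P->|z /set1P->]; rewrite ?set11.
case: (eqVneq x j) => [-> | xj]; last first.
  rewrite mul_s_id //; apply: block_imageD1 (blk_image x) _.
  by rewrite -sji (inj_eq perm_inj) eq_sym.
rewrite mul_s_r (blk_eq jBi); apply: block_image_min.
- rewrite !inE perm_blk andbT -[X in _ != X]sji (inj_eq perm_inj).
  by rewrite -(inj_eq val_inj) ij ltn_eqF.
- move=> z /setD1P[zi /imin]; move: zi ij; rewrite -(inj_eq val_inj) /=; lia.
- by move=> z /setD1P[_]; apply: perm_max; apply/leq_perm_min.
Qed.

Lemma isNC_merge_fixed : s i = i -> (s j < i)%N -> isNC t.
Proof.
move=> si sji; set C := blk j; set U := i |: C.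
have jU : j \in U by rewrite setU1r ?mem_blk.
have outU x y : x \notin U -> y \in blk x -> y \notin U.
  move=> xNU yx; apply: contra xNU; rewrite blk_sym in yx.
  case/setU1P => [yi | yC]; last by rewrite setU1r // /C -(blk_eq yC).
  by move: yx; rewrite yi blk_fixed // inE => /eqP->; apply: setU11.
pose bl x := if x \in U then U else blk x.
apply: (@isNC_of_blocks _ _ bl) => [x | x y | x y | x]; rewrite /bl.
- by case: ifP => // _; apply: mem_blk.
- case: ifP => [_ -> // | /negbT xNU yx].
  by rewrite (negbTE (outU x y xNU yx)) (blk_eq yx).
- have crossU z : z \notin U -> crosses U (blk z) \/ crosses (blk z) U -> False.
    move=> zNU cr; have iNz := contraL (outU z i zNU) (setU11 i C).
    have jNz := contraL (outU z j zNU) jU.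
    suff Cz : C = blk z by move: zNU; rewrite !inE Cz mem_blk orbT.
    case: cr => [/(crosses_setU1l ij (mem_blk j) iNz jNz) /blk_crosses // |].
    by move=> /(crosses_setU1r ij (mem_blk j) iNz jNz) /blk_crosses.
  case: ifP => xU; case: ifP => yU cr //; last exact: blk_crosses.
    by case: (crossU y (negbT yU)); left.
  by case: (crossU x (negbT xU)); right.
case: (eqVneq x i) => [-> | xi].
  rewrite setU11 mul_s_l; apply: block_image_lt => //; first exact: setU1r (perm_blk j).
  move=> z /setU1P[-> | zC zi]; first lia.
  by have [] := perm_ltn zC (ltac:(move: ij => /= ij'; lia)).
case: (eqVneq x j) => [-> | xj].
  rewrite jU mul_s_r si; move: ij => /= ij'.
  by apply: block_image_lt => [|| z _]; rewrite ?setU11 //; lia.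
rewrite mul_s_id //; case: ifP => [/setU1P[/eqP | xC] | _]; last exact: blk_image.
  by rewrite (negbTE xi).
apply: block_imageU1_adjacent ij (mem_blk j) xj _.
by rewrite /C -(blk_eq xC); apply: blk_image.
Qed.

Lemma isNC_mul_adjacent : (i <= s i)%N -> (s j < j)%N -> isNC t.
Proof.
move=> hi sjj; have imin := iffLR (leq_perm_min i) hi.
case: (eqVneq (s j) i) => [sji | sjNi]; first exact: isNC_split_min.
have sji : (s j < i)%N by move: sjNi ij; rewrite -(inj_eq val_inj) /=; lia.
apply: (isNC_merge_fixed _ sji); apply/eqP; apply: contraT => siNi.
have jNi : j \notin blk i.
  by apply/negP => /blk_eq bji; move: (perm_blk j); rewrite bji => /imin; lia.
have siNj : s i != j by apply: contraNneq jNi => <-; apply: perm_blk.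
have : blk j = blk i.
  apply: blk_crosses; exists (s j), j, i, (s i); rewrite !perm_blk !mem_blk.
  by move: siNi siNj ij; rewrite -!(inj_eq val_inj) /=; split=> //; split; lia.
by move=> bji; rewrite -bji mem_blk in jNi.
Qed.

End AdjacentTransposition.

End NoncrossingPartition.

Lemma tperm_adjacent_ltn n (i j x y : 'I_n) : val j = (val i).+1 ->
  ((x, y) != (i, j)) && (x < y)%N =
  ((x, y) != (j, i)) && (tperm i j x < tperm i j y)%N.
Proof.
have eqE (a b : 'I_n) : (a == b) = (a == b :> nat) by [].
move=> /= ij; rewrite !xpair_eqE.
case: tpermP => [-> | -> | /eqP + /eqP]; case: tpermP => [-> | -> | /eqP + /eqP];
  rewrite ?eqxx !eqE => *; apply/idP/idP; lia.
Qed.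

Lemma coxlen_mul_s n (s : {perm 'I_n}) (i j : 'I_n) : val j = (val i).+1 ->
  (coxlen (mul_s s i j) < coxlen s)%N = (s j < s i)%N.
Proof.
move=> ij; set t := mul_s s i j.
pose inv (u : {perm 'I_n}) :=
  [set p : 'I_n * 'I_n | (p.1 < p.2)%N && (u p.2 < u p.1)%N].
(* Off the pair (i, j), swap is a bijection between the inversions of s and t. *)
pose swap (p : 'I_n * 'I_n) := (tperm i j p.1, tperm i j p.2).
have swap_inj : injective swap by move=> [a b] [c d] [/perm_inj-> /perm_inj->].
have inv_t : inv s :\ (i, j) = swap @^-1: (inv t :\ (i, j)).
  apply/setP => -[x y]; rewrite !inE /= !mul_sE !tpermK.
  have tperm_eq z w : (tperm i j z == w) = (z == tperm i j w).
    by rewrite -(inj_eq (@perm_inj _ (tperm i j))) tpermK.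
  rewrite !xpair_eqE !tperm_eq tpermL tpermR -!xpair_eqE.
  by rewrite andbA tperm_adjacent_ltn // -andbA.
have cox_s : coxlen s = ((i, j) \in inv s) + #|inv s :\ (i, j)|.
  by rewrite /coxlen -cardsD1.
have cox_t : coxlen t = ((i, j) \in inv t) + #|inv s :\ (i, j)|.
  by rewrite inv_t card_preimset // /coxlen -cardsD1.
have sij : s i != s j by rewrite (inj_eq perm_inj) -(inj_eq val_inj) ij ltn_eqF.
rewrite cox_s cox_t ltn_add2r !inE /= /t mul_s_l mul_s_r ij ltnSn /=.
by case: (ltngtP (s i) (s j)) sij => // ->; rewrite eqxx.
Qed.

Lemma cycle_min_fixed n (s : {perm 'I_n}) x :
  cycle_min s x -> cycle_min s (s x) -> s x = x.
Proof.
move=> /forall_inP xmin /forall_inP sxmin.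
have orb_s : porbit s (s x) = porbit s x by have := porbit_perm s 1 x; rewrite expg1.
have x_orb : x \in porbit s (s x) by rewrite orb_s porbit_id.
have sx_orb : s x \in porbit s x by rewrite -orb_s porbit_id.
by apply/val_inj/eqP; rewrite eqn_leq sxmin ?xmin.
Qed.

Lemma exists_not_cycle_min n (s : {perm 'I_n}) : s != 1%g -> exists x, ~~ cycle_min s x.
Proof.
move=> s_nontriv; have [x sx] : exists x, s x != x.
  case: (pickP (fun x => s x != x)) => [x sx | fixed]; first by exists x.
  by case/eqP: s_nontriv; apply/permP => x; rewrite perm1; apply/eqP/negbFE/fixed.
case: (boolP (cycle_min s x)) => [xmin | ]; last by exists x.
by exists (s x); apply: contra sx => sxmin; rewrite cycle_min_fixed.
Qed.

Lemma exists_cycle_min_boundary n (s : {perm 'I_n}) : s != 1%g ->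
  exists i j : 'I_n, [/\ val j = (val i).+1, cycle_min s i & ~~ cycle_min s j].
Proof.
move=> /exists_not_cycle_min[x xnmin].
case: (@arg_minnP _ x [pred y | ~~ cycle_min s y] (@nat_of_ord n) xnmin).
move=> j jnmin jfirst.
have j_gt0 : (0 < j)%N.
  by rewrite lt0n; apply: contraNneq jnmin => j0; apply/forall_inP => y _; rewrite j0.
have i_lt : (j.-1 < n)%N by rewrite (leq_ltn_trans (leq_pred j)).
exists (Ordinal i_lt), j; split=> //=; first by rewrite prednK.
by apply: contraT => /jfirst /=; rewrite leqNgt ltn_predL j_gt0.
Qed.

Lemma nc_descentE n (s : {perm 'I_n}) (i j : 'I_n) : isNC s -> val j = (val i).+1 ->
  nc_descent s i j <-> cycle_min s i /\ ~~ cycle_min s j.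
Proof.
case=> P [partP ncP imgP] ij.
rewrite !(cycle_minE partP imgP) -ltnNge /nc_descent coxlen_mul_s //.
split=> [[[Q [partQ ncQ imgQ]]] | [hi sjj]].
  have := adjacent_perm_ltn partQ ncQ imgQ ij.
  by rewrite mul_s_l mul_s_r => desc /desc.
split; first exact: (isNC_mul_adjacent partP ncP imgP ij hi sjj).
have : s i != s j by rewrite (inj_eq perm_inj) -(inj_eq val_inj) ij ltn_eqF.
by move: ij hi sjj; rewrite -(inj_eq val_inj) /=; lia.
Qed.

Theorem proposition7p7 (n : nat) (s : {perm 'I_n}) :
  isNC s ->
  (forall i j : 'I_n, val j = (val i).+1 ->
     (nc_descent s i j <-> (cycle_min s i /\ ~~ cycle_min s j))) /\
  (s != 1%g -> exists i j : 'I_n, val j = (val i).+1 /\ nc_descent s i j).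
Proof.
move=> ncs; split=> [i j ij | s_nontriv]; first exact: nc_descentE.
have [i [j [ij imin jnmin]]] := exists_cycle_min_boundary s_nontriv.
by exists i, j; split=> //; apply/(nc_descentE ncs ij).
Qed.
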